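(* Let $\nu\in(0,1]$, $\varrho>0$, $\delta>0$ and $x\in K_\nu^\varrho$. Let $g^\delta\in\mathbb Y$ satisfy $\|g^\delta-Ax\|_{\mathbb Y}\le\delta$, let $\alpha>0$ and $\hat x_\alpha\in R_\alpha(g^\delta)$. 1. (a priori rule) Let $c_r\ge c_l>0$. If $c_l\varrho^{-1/\nu}\delta^{1/\nu}\le\alpha\le c_r\varrho^{-1/\nu}\delta^{1/\nu}$, then $L(x,\hat x_\alpha)\le\Omega(c_1\delta,K_\nu^{c_2\varrho})$ with $c_1:=1+c_r^\nu$ and $c_2:=2+c_l^{-\nu}$. 2. (discrepancy principle) Let $C_D>c_D>1$. If $c_D\delta\le\|g^\delta-A\hat x_\alpha\|_{\mathbb Y}\le C_D\delta$, then $L(x,\hat x_\alpha)\le\Omega(d_1\delta,K_\nu^{d_2\varrho})$ with $d_1:=1+C_D$ and $d_2:=2+(c_D-1)^{-1}$.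
   Context: Standing setting: $\mathbb X$ is a real Banach space and $\tau$ is a topology on $\mathbb X$ such that $(\mathbb X,\tau)$ is a locally convex Hausdorff space. $\mathcal R:\mathbb X\to(-\infty,\infty]$ is proper and convex, and for every $\lambda\in\mathbb R$ the sublevel set $\{x\in\mathbb X:\mathcal R(x)\le\lambda\}$ is $\tau$-compact. $\mathbb Y$ is a real Hilbert space and $A:\mathbb X\to\mathbb Y$ is linear and continuous from $(\mathbb X,\tau)$ to $\mathbb Y$ equipped with its weak topology. For $\alpha>0$, $g\in\mathbb Y$ and $x\in\mathrm{dom}(\mathcal R)$ let $T_\alpha(x,g):=\frac1{2\alpha}\|g-Ax\|_{\mathbb Y}^2+\mathcal R(x)$ and $R_\alpha(g):=\operatorname{argmin}_{x\in\mathrm{dom}(\mathcal R)}T_\alpha(x,g)$ (a nonempty set). For $\nu\ge0$ define $\varrho_\nu:\mathbb X\to[0,\infty]$ by $\varrho_\nu(x):=\sup\{\alpha^{-\nu}\|Ax-Ax_\alpha\|_{\mathbb Y}:\alpha>0,\ x_\alpha\in R_\alpha(Ax)\}$, and for $\varrho>0$ set $K_\nu^\varrho:=\{x\in\mathbb X:\varrho_\nu(x)\le\varrho\}$ and $K_\nu:=\{x\in\mathbb X:\varrho_\nu(x)<\infty\}$. Let $L:\mathbb X\times\mathbb X\to[0,\infty]$ satisfy the triangle inequality $L(x,z)\le L(x,y)+L(y,z)$. For $K\subset\mathbb X$ and $\delta>0$ the modulus of continuity is $\Omega(\delta,K):=\sup\{L(x_1,x_2):x_1,x_2\in K,\ \|Ax_1-Ax_2\|_{\mathbb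 Y}\le\delta\}$. *)

From HB Require Import structures.
From mathcomp Require Import all_boot all_order all_algebra.
From mathcomp Require Import all_classical all_reals all_analysis.
Set Implicit Arguments. Unset Strict Implicit. Unset Printing Implicit Defensive.
Import Order.TTheory GRing.Theory Num.Theory.
Import numFieldNormedType.Exports.
Local Open Scope classical_set_scope.
Local Open Scope ring_scope.
Local Open Scope ereal_scope.

(* ip is an inner product on the normed space Y inducing its norm;
   a Hilbert space is a complete normed space with such an inner product. *)
Definition is_inner_product (R : realType) (Y : normedModType R)
    (ip : Y -> Y -> R) : Prop :=
  [/\ (forall y z : Y, ip y z = ip z y),
      (forall (a : R) (y z w : Y), ip (a *: y + z)%R w = (a * ip y w + ip z w)%R)
    & (forall y : Y, ip y y = (`|y| ^+ 2)%R)].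

Definition proper_fun (R : realType) (X : Type) (F : X -> \bar R) : Prop :=
  (forall x, F x != -oo) /\ (exists x, F x < +oo).

Definition convex_efun (R : realType) (X : lmodType R) (F : X -> \bar R) : Prop :=
  forall (x y : X) (t : R), (0 < t < 1)%R ->
    F (t *: x + (1 - t) *: y)%R <= t%:E * F x + (1 - t)%:E * F y.

Definition domR (R : realType) (X : Type) (F : X -> \bar R) : set X :=
  [set x | F x < +oo].

Definition Talpha (R : realType) (X : Type) (Y : normedModType R)
    (A : X -> Y) (F : X -> \bar R) (alpha : R) (x : X) (g : Y) : \bar R :=
  ((2 * alpha)^-1 * `|g - A x| ^+ 2)%:E + F x.

Definition Ralpha (R : realType) (X : Type) (Y : normedModType R)
    (A : X -> Y) (F : X -> \bar R) (alpha : R) (g : Y) : set X :=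
  [set x | domR F x /\
     forall z, domR F z -> Talpha A F alpha x g <= Talpha A F alpha z g].

Definition varrho_nu (R : realType) (X : Type) (Y : normedModType R)
    (A : X -> Y) (F : X -> \bar R) (nu : R) (x : X) : \bar R :=
  ereal_sup [set r | exists alpha xa, (0 < alpha)%R /\ Ralpha A F alpha (A x) xa
                       /\ r = (alpha `^ (- nu) * `|A x - A xa|)%:E].

Definition Knu (R : realType) (X : Type) (Y : normedModType R)
    (A : X -> Y) (F : X -> \bar R) (nu rho : R) : set X :=
  [set x | varrho_nu A F nu x <= rho%:E].

Definition Knu_inf (R : realType) (X : Type) (Y : normedModType R)
    (A : X -> Y) (F : X -> \bar R) (nu : R) : set X :=
  [set x | varrho_nu A F nu x < +oo].

Definition Omega (R : realType) (X : Type) (Y : normedModType R)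
    (A : X -> Y) (L : X -> X -> \bar R) (delta : R) (K : set X) : \bar R :=
  ereal_sup [set r | exists x1 x2, K x1 /\ K x2 /\ (`|A x1 - A x2| <= delta)%R
                       /\ r = L x1 x2].

From HB Require Import structures.
From mathcomp Require Import all_boot all_order all_algebra.
From mathcomp Require Import all_classical all_reals all_analysis.
From mathcomp Require Import ring lra.
Import Order.TTheory GRing.Theory Num.Theory.
Import numFieldNormedType.Exports.
Local Open Scope classical_set_scope.
Local Open Scope ring_scope.
Set Implicit Arguments. Unset Strict Implicit.

(* Write x_a(g) for any element of R_a(g).  The proof rests on the first-order
   optimality condition of Tikhonov minimizers,
       R(u) - R(v) <= <g - Au, Au - Av> / a      (u in R_a(g), v in dom R),
   obtained by comparing u with the points of the segment from u to v.  Adding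
   two instances gives a monotonicity estimate between minimizers, whence
   (i) g |-> A x_a(g) and the residual g |-> g - A x_a(g) are nonexpansive, and
   (ii) |Au - Av| <= (b/a) |g - Au| for u in R_a(g), v in R_b(Au).
   Minimizers exist because sublevel sets of R are tau-compact and T_a(., g)
   is tau-lower semicontinuous (A is tau-to-weakly continuous).
   For x in K_nu^rho, |g - Ax| <= delta and xh in R_a(g) this yields
       |Ax - Axh| <= rho a^nu + delta,   |g - Axh| <= delta + rho a^nu,
       xh in K_nu^(a^(-nu) delta + 2 rho)          (here nu <= 1 is used),
   so L(x, xh) <= Omega(rho a^nu + delta, K_nu^(a^(-nu) delta + 2 rho)), and
   each parameter choice rule only has to bound rho a^nu and a^(-nu) delta. *)

Section InnerProduct.
Variables (R : realType) (Y : normedModType R) (ip : Y -> Y -> R).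
Hypothesis hip : is_inner_product ip.

Lemma ipC y z : ip y z = ip z y.
Proof. by case: hip. Qed.

Lemma ipn y : ip y y = `|y| ^+ 2.
Proof. by case: hip. Qed.

Lemma ip0l w : ip 0 w = 0.
Proof. by case: hip => _ hl _; have := hl 1 0 0 w; rewrite scale1r addr0 mul1r; lra. Qed.

Lemma ipDl y z w : ip (y + z) w = ip y w + ip z w.
Proof. by case: hip => _ hl _; rewrite -[y]scale1r hl mul1r scale1r. Qed.

Lemma ipZl a y w : ip (a *: y) w = a * ip y w.
Proof. by case: hip => _ hl _; rewrite -[a *: y]addr0 hl ip0l addr0. Qed.

Lemma ipNl y w : ip (- y) w = - ip y w.
Proof. by rewrite -scaleN1r ipZl mulN1r. Qed.

Lemma ipBl y z w : ip (y - z) w = ip y w - ip z w.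
Proof. by rewrite ipDl ipNl. Qed.

Lemma ipDr y z w : ip w (y + z) = ip w y + ip w z.
Proof. by rewrite ipC ipDl (ipC y) (ipC z). Qed.

Lemma normD2 y z : `|y + z| ^+ 2 = `|y| ^+ 2 + 2 * ip y z + `|z| ^+ 2.
Proof. by rewrite -!ipn ipDl !ipDr (ipC z y); ring. Qed.

Lemma normB2 y z : `|y - z| ^+ 2 = `|y| ^+ 2 - 2 * ip y z + `|z| ^+ 2.
Proof. by rewrite normD2 normrN ipC ipNl ipC; ring. Qed.

(* Cauchy-Schwarz, obtained from the triangle inequality of the norm. *)
Lemma ip_le_norm y z : ip y z <= `|y| * `|z|.
Proof.
have hD := normD2 y z.
have htri : `|y + z| ^+ 2 <= (`|y| + `|z|) ^+ 2.
  by rewrite ler_sqr ?nnegrE ?addr_ge0 // ler_normD.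
nra.
Qed.

Lemma abs_ip_le_norm y z : `|ip y z| <= `|y| * `|z|.
Proof.
rewrite ler_norml ip_le_norm andbT -[ip y z]opprK -ipNl lerN2.
by rewrite -[`|y|]normrN ip_le_norm.
Qed.

End InnerProduct.

Lemma proper_finite (R : realType) (X : Type) (F : X -> \bar R) :
  proper_fun F -> forall z, (F z < +oo)%E -> exists r, F z = r%:E.
Proof. by case=> hF _ z; case: (F z) (hF z) => [r||] // _ _; exists r. Qed.

Lemma le_small_multiples (R : realType) (a c : R) : 0 <= c ->
  (forall t : R, 0 < t < 1 -> a <= t * c) -> a <= 0.
Proof.
move=> hc h; rewrite leNgt; apply/negP => ha.
have hca : 0 < c + a by lra.
set t := a / (2 * (c + a)).
have Ht : t * (2 * (c + a)) = a by rewrite /t mulfVK // mulf_neq0 // gt_eqF.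
have t0 : 0 < t by rewrite /t divr_gt0 // mulr_gt0.
have t1 : t < 1 by nra.
by have := h t; rewrite t0 t1 => /(_ isT); nra.
Qed.

Section Tikhonov.
Variables (R : realType) (X : lmodType R) (Y : normedModType R).
Variables (ip : Y -> Y -> R) (A : {linear X -> Y}) (F : X -> \bar R).
Hypotheses (hip : is_inner_product ip) (hFp : proper_fun F) (hFc : convex_efun F).

(* Comparing a minimizer u with the points u + t (v - u) of the segment
   towards v gives the optimality condition up to an O(t) error. *)
Lemma optimality_on_segment (alpha : R) (g : Y) (u v : X) (fu fv t : R) :
  0 < alpha -> Ralpha A F alpha g u -> F u = fu%:E -> F v = fv%:E -> 0 < t < 1 ->
  fu - fv + ip (g - A u) (A v - A u) / alpha <=
    t * (`|A v - A u| ^+ 2 / (2 * alpha)).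
Proof.
move=> ha [_ hmin] Eu Ev /andP[t0 t1].
set r := g - A u; set d := A v - A u; set z := t *: v + (1 - t) *: u.
have hz : (F z <= (t * fv + (1 - t) * fu)%:E)%E.
  by have := @hFc v u t; rewrite t0 t1 Ev Eu => /(_ isT).
have hzd : domR F z by apply: le_lt_trans hz _; exact: ltry.
have Az : g - A z = r - t *: d.
  have -> : A z = A u + t *: d.
    by rewrite linearD !linearZ /= scalerBl scale1r scalerBr addrCA.
  by rewrite opprD addrA.
have := le_trans (hmin z hzd) (leeD2l _ hz).
rewrite /Talpha Eu -!EFinD lee_fin Az (normB2 hip r) (ipC hip r (t *: d)).
rewrite (ipZl hip) (ipC hip d).
rewrite normrZ (ger0_norm (ltW t0)) -/r.
have ai : 0 < alpha^-1 by rewrite invr_gt0.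
rewrite !invfM => hm.
suff : t * (fu - fv + ip r d * alpha^-1) <= t * (t * (`|d| ^+ 2 * (2^-1 * alpha^-1))).
  by rewrite ler_pM2l.
nra.
Qed.

Lemma var_ineq (alpha : R) (g : Y) (u v : X) : 0 < alpha ->
  Ralpha A F alpha g u -> (F v < +oo)%E ->
  fine (F u) - fine (F v) <= ip (g - A u) (A u - A v) / alpha.
Proof.
move=> ha hu hv.
have [fu Eu] := proper_finite hFp hu.1; have [fv Ev] := proper_finite hFp hv.
have c0 : 0 <= `|A v - A u| ^+ 2 / (2 * alpha).
  by rewrite divr_ge0 ?sqr_ge0 ?mulr_ge0 ?ltW.
have := le_small_multiples c0 (fun t => optimality_on_segment (t:=t) ha hu Eu Ev).
rewrite Eu Ev /= -[A v - A u]opprB (ipC hip _ (- _)) (ipNl hip).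
by rewrite (ipC hip (A u - A v)) mulNr; lra.
Qed.

Lemma minimizers_monotone (alpha beta : R) (g1 g2 : Y) (u v : X) :
  0 < alpha -> 0 < beta -> Ralpha A F alpha g1 u -> Ralpha A F beta g2 v ->
  ip (g2 - A v) (A u - A v) / beta <= ip (g1 - A u) (A u - A v) / alpha.
Proof.
move=> ha hb hu hv.
have h1 := var_ineq ha hu hv.1; have h2 := var_ineq hb hv hu.1.
rewrite -[A v - A u]opprB (ipC hip _ (- _)) (ipNl hip) in h2.
by rewrite (ipC hip (A u - A v)) mulNr in h2; lra.
Qed.

Lemma minimizers_nonexpansive (alpha : R) (g1 g2 : Y) (u v : X) : 0 < alpha ->
  Ralpha A F alpha g1 u -> Ralpha A F alpha g2 v ->
  `|A u - A v| <= `|g1 - g2| /\ `|(g1 - A u) - (g2 - A v)| <= `|g1 - g2|.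
Proof.
move=> ha hu hv; have := minimizers_monotone ha ha hu hv.
rewrite ler_pM2r ?invr_gt0 // => hmono.
have e : (g1 - A u) - (g2 - A v) = (g1 - g2) - (A u - A v).
  by rewrite !opprB addrACA [RHS]addrACA [- A u + _]addrC.
have h0 : 0 <= ip ((g1 - g2) - (A u - A v)) (A u - A v).
  by rewrite -e (ipBl hip); lra.
rewrite e; rewrite (ipBl hip) (ipn hip) in h0.
have cs := ip_le_norm hip (g1 - g2) (A u - A v).
have n1 := normB2 hip (g1 - g2) (A u - A v).
have p1 : 0 <= `|A u - A v| by []. have p2 : 0 <= `|g1 - g2| by [].
split; first nra.
by rewrite -ler_sqr ?nnegrE //; nra.
Qed.

Lemma minimizers_shrink (alpha beta : R) (g : Y) (u v : X) :
  0 < alpha -> 0 < beta -> Ralpha A F alpha g u -> Ralpha A F beta (A u) v ->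
  `|A u - A v| <= beta / alpha * `|g - A u|.
Proof.
move=> ha hb hu hv; have := minimizers_monotone ha hb hu hv.
rewrite (ipn hip) ler_pdivrMr // [_ / alpha * beta]mulrC mulrA mulrAC => hmono.
have k : 0 <= beta / alpha by rewrite divr_ge0 ?ltW.
have := le_trans hmono (ler_wpM2l k (ip_le_norm hip (g - A u) (A u - A v))).
have : 0 <= `|A u - A v| by [].
have : 0 <= beta / alpha * `|g - A u| by rewrite mulr_ge0.
nra.
Qed.

End Tikhonov.

(* Existence of minimizers: tau is given as a topology on a copy Xt of X,
   related to X by the mutually inverse maps e and ei. *)
Section Existence.
Variables (R : realType) (X : lmodType R) (Xt : topologicalType).
Variables (e : X -> Xt) (ei : Xt -> X) (Y : normedModType R).
Variables (ip : Y -> Y -> R) (A : {linear X -> Y}) (F : X -> \bar R).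
Hypotheses (hip : is_inner_product ip) (hei : cancel e ei) (hie : cancel ei e).
Hypotheses (hXt : hausdorff_space Xt) (hFp : proper_fun F).
Hypothesis hFcomp : forall lam : R, compact (e @` [set z | (F z <= lam%:E)%E]).
Hypothesis hA : forall f : {linear Y -> R^o}, continuous f ->
  continuous (fun z : Xt => f (A (ei z))).

(* The functional y |-> <y, w>: it is linear and continuous, so that A is
   continuous against it (A is continuous into the weak topology of Y). *)
Definition ip_against (w : Y) : Y -> R^o := fun y => ip y w.

Lemma ip_against_linear w : GRing.linear_for *:%R (ip_against w).
Proof. by move=> a u v; case: hip => _ hl _; rewrite /ip_against hl. Qed.

HB.instance Definition _ w :=
  GRing.isLinear.Build R Y R^o *:%R (ip_against w) (ip_against_linear w).

Lemma ip_against_continuous w : continuous (ip_against w).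
Proof.
move=> y; apply/cvgrPdist_lt => eps eps0.
have hw : 0 < `|w| + 1 by rewrite ltr_wpDl.
near=> z.
have hz : `|y - z| < eps / (`|w| + 1).
  by near: z; apply: (cvgrPdist_lt _ _).1 (@cvg_id _ (nbhs y)) _ (divr_gt0 eps0 hw).
rewrite /ip_against -(ipBl hip); apply: le_lt_trans (abs_ip_le_norm hip _ _) _.
have hle : `|y - z| * `|w| <= `|y - z| * (`|w| + 1) by rewrite ler_wpM2l // lerDl.
by apply: le_lt_trans hle _; rewrite -ltr_pdivlMr.
Unshelve. all: by end_near.
Qed.

(* R is tau-lower semicontinuous: its sublevel sets are tau-compact, hence
   tau-closed in the Hausdorff space Xt. *)
Lemma F_lsc p a : (a%:E < F (ei p))%E -> \forall q \near p, (a%:E < F (ei q))%E.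
Proof.
move=> hp.
set S := e @` [set z | (F z <= a%:E)%E].
have oS : open (~` S) by apply: closed_openC; exact: compact_closed hXt (@hFcomp a).
have Sp : (~` S) p by move=> [z /= hz ez]; move: hp; rewrite -ez hei ltNge hz.
near=> q.
have : (~` S) q by near: q; apply: open_nbhs_nbhs.
by move=> hq; rewrite ltNge; apply/negP => hle; apply: hq; exists (ei q).
Unshelve. all: by end_near.
Qed.

(* The discrepancy term is tau-lower semicontinuous: it dominates the
   tau-continuous affine minorant q |-> 2<g - A q, w0> - |w0|^2 which touches
   it at p, where w0 = g - A p. *)
Lemma discrepancy_lsc (g : Y) (alpha : R) p b : 0 < alpha ->
  b < (2 * alpha)^-1 * `|g - A (ei p)| ^+ 2 ->
  \forall q \near p, b < (2 * alpha)^-1 * `|g - A (ei q)| ^+ 2.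
Proof.
move=> ha hb.
set w0 := g - A (ei p).
set k := fun q => (2 * alpha)^-1 *
  (2 * (ip g w0 - ip_against w0 (A (ei q))) - `|w0| ^+ 2).
have hk : k @ p --> k p.
  apply: cvgM; first exact: cvg_cst.
  apply: cvgB; last exact: cvg_cst.
  apply: cvgM; first exact: cvg_cst.
  apply: cvgB; first exact: cvg_cst.
  exact: @hA _ (@ip_against_continuous w0) p.
have kp : k p = (2 * alpha)^-1 * `|w0| ^+ 2.
  by rewrite /k /ip_against -(ipBl hip) (ipn hip); congr (_ * _); ring.
near=> q.
have hq : b < k q by near: q; apply: (cvgr_gt _ hk); rewrite kp.
apply: lt_le_trans hq _; rewrite /k ler_pM2l ?invr_gt0 ?mulr_gt0 //.
have := normB2 hip (g - A (ei q)) w0.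
rewrite /ip_against -(ipBl hip).
have : 0 <= `|g - A (ei q) - w0| ^+ 2 by rewrite sqr_ge0.
lra.
Unshelve. all: by end_near.
Qed.

Lemma discrepancy_ge0 (g : Y) (alpha : R) x : 0 < alpha ->
  0 <= (2 * alpha)^-1 * `|g - A x| ^+ 2.
Proof. by move=> ha; rewrite mulr_ge0 ?sqr_ge0 // invr_ge0 mulr_ge0 // ltW. Qed.

Lemma Talpha_lsc (g : Y) (alpha : R) p l : 0 < alpha ->
  (l%:E < Talpha A F alpha (ei p) g)%E ->
  \forall q \near p, (l%:E < Talpha A F alpha (ei q) g)%E.
Proof.
rewrite /Talpha => ha; case Ep: (F (ei p)) => [fp| |] hl.
- rewrite -EFinD lte_fin in hl.
  set d := (2 * alpha)^-1 * `|g - A (ei p)| ^+ 2 + fp - l.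
  have dE : d = (2 * alpha)^-1 * `|g - A (ei p)| ^+ 2 + fp - l by [].
  have d0 : 0 < d by lra.
  near=> q.
  have hq1 : (2 * alpha)^-1 * `|g - A (ei p)| ^+ 2 - d / 2 <
             (2 * alpha)^-1 * `|g - A (ei q)| ^+ 2.
    by near: q; apply: discrepancy_lsc => //; lra.
  have hq2 : ((fp - d / 2)%:E < F (ei q))%E.
    by near: q; apply: F_lsc; rewrite Ep lte_fin; lra.
  apply: lt_le_trans (leeD2l _ (ltW hq2)); rewrite -EFinD lte_fin; lra.
- near=> q.
  have hq : (l%:E < F (ei q))%E by near: q; apply: F_lsc; rewrite Ep ltry.
  by apply: lt_le_trans hq _; apply: leeDr; rewrite lee_fin discrepancy_ge0.
- by case: hFp => /(_ (ei p)); rewrite Ep.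
Unshelve. all: by end_near.
Qed.

(* Existence of Tikhonov minimizers: the sublevel sets of T_alpha(., g) form
   a proper filter base contained eventually in a compact sublevel set of R;
   a cluster point is a minimizer by lower semicontinuity. *)
Lemma exists_minimizer (g : Y) (alpha : R) : 0 < alpha ->
  exists u, Ralpha A F alpha g u.
Proof.
move=> ha.
set h := fun q => Talpha A F alpha (ei q) g.
have [x0 hx0] := hFp.2; have [f0 E0] := proper_finite hFp hx0.
set l0 := (2 * alpha)^-1 * `|g - A x0| ^+ 2 + f0 + 1.
set I := [set l : R | exists q, (h q < l%:E)%E].
set B := fun l : R => [set q | (h q <= l%:E)%E].
have I0 : I l0 by exists (e x0); rewrite /h /Talpha hei E0 -EFinD lte_fin /l0; lra.
have filt : Filter (filter_from I B).
  apply: filter_from_filter; first by exists l0.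
  move=> i j Ii Ij; have [lij|lij] := leP i j.
  - by exists i => // q /= hq; split => //; exact: le_trans hq _.
  - by exists j => // q /= hq; split => //; apply: le_trans hq _; rewrite lee_fin ltW.
have prop : ProperFilter (filter_from I B).
  by apply: filter_from_proper => l [q hq]; exists q; exact: ltW.
have GK : filter_from I B (e @` [set z | (F z <= l0%:E)%E]).
  exists l0 => // q hq; exists (ei q); last exact: hie.
  apply: le_trans hq; rewrite /h /Talpha; apply: leeDr; rewrite lee_fin.
  exact: discrepancy_ge0.
have [p [_ cp]] := @hFcomp l0 _ prop GK.
have hpl : forall l, I l -> (h p <= l%:E)%E.
  move=> l Il; rewrite leNgt; apply/negP => hlt.
  have GB : filter_from I B (B l) by exists l.
  have [r [Br Nr]] := cp (B l) _ GB (Talpha_lsc ha hlt).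
  by move: Br; rewrite /B /= leNgt Nr.
exists (ei p); split.
- apply: le_lt_trans (le_lt_trans (hpl l0 I0) (ltry _)).
  by rewrite /h /Talpha; apply: leeDr; rewrite lee_fin discrepancy_ge0.
- move=> z hz; have [fz Ez] := proper_finite hFp hz.
  rewrite {2}/Talpha Ez -EFinD; apply/lee_addgt0Pr => eps eps0.
  rewrite -EFinD; apply: hpl; exists (e z).
  by rewrite /h hei /Talpha Ez -EFinD lte_fin; lra.
Qed.

End Existence.

Lemma powRN_mulr (R : realType) (a nu : R) : 0 < a -> a `^ (- nu) * a `^ nu = 1.
Proof. by move=> a0; rewrite powRN mulVf // gt_eqF // powR_gt0. Qed.

Lemma powRN_le (R : realType) (a b nu : R) :
  0 <= nu -> 0 < a -> a <= b -> b `^ (- nu) <= a `^ (- nu).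
Proof.
move=> nu0 a0 ab; have b0 := lt_le_trans a0 ab.
rewrite !powRN lef_pV2 ?posrE ?powR_gt0 //.
by apply: ge0_ler_powR; rewrite // nnegrE ltW.
Qed.

(* For nu <= 1 the map a |-> a^(1 - nu) = a^(-nu) a is nondecreasing. *)
Lemma powRN_mulr_le (R : realType) (a b nu : R) :
  nu <= 1 -> 0 < b -> b <= a -> b `^ (- nu) * b <= a `^ (- nu) * a.
Proof.
move=> nu1 b0 ba; have a0 := lt_le_trans b0 ba.
have e c : 0 < c -> c `^ (- nu) * c = c `^ (1 - nu).
  move=> c0; rewrite [1 - nu]addrC powRD ?powRr1 ?ltW //.
  by apply/implyP => _; rewrite gt_eqF.
by rewrite !e //; apply: ge0_ler_powR; rewrite ?nnegrE; lra.
Qed.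

Section SourceSets.
Variables (R : realType) (X : Type) (Y : normedModType R).
Variables (A : X -> Y) (F : X -> \bar R) (nu : R).

Lemma Knu_error_bound rho x a xa : Knu A F nu rho x -> 0 < a ->
  Ralpha A F a (A x) xa -> `|A x - A xa| <= rho * a `^ nu.
Proof.
move=> hx a0 hxa.
have : ((a `^ (- nu) * `|A x - A xa|)%:E <= varrho_nu A F nu x)%E.
  by apply: ereal_sup_ubound; exists a, xa.
move=> /le_trans /(_ hx); rewrite lee_fin powRN ler_pdivrMl ?powR_gt0 //.
by rewrite mulrC.
Qed.

Lemma Knu_intro c z :
  (forall b v, 0 < b -> Ralpha A F b (A z) v -> b `^ (- nu) * `|A z - A v| <= c) ->
  Knu A F nu c z.
Proof.
move=> h; apply: ge_ereal_sup => r [b [v [b0 [hv ->]]]].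
by rewrite lee_fin; exact: h.
Qed.

Lemma Knu_mono c c' : c <= c' -> Knu A F nu c `<=` Knu A F nu c'.
Proof. by move=> cc' z hz; apply: le_trans hz _; rewrite lee_fin. Qed.

End SourceSets.

Lemma le_Omega (R : realType) (X : Type) (Y : normedModType R) (A : X -> Y)
  (L : X -> X -> \bar R) (D : R) (K : set X) (x1 x2 : X) :
  K x1 -> K x2 -> `|A x1 - A x2| <= D -> (L x1 x2 <= Omega A L D K)%E.
Proof. by move=> h1 h2 hD; apply: ereal_sup_ubound; exists x1, x2. Qed.

Section Stability.
Variables (R : realType) (X : lmodType R) (Y : normedModType R).
Variables (ip : Y -> Y -> R) (A : {linear X -> Y}) (F : X -> \bar R).
Hypotheses (hip : is_inner_product ip) (hFp : proper_fun F) (hFc : convex_efun F).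
Hypothesis hex : forall (g : Y) (a : R), 0 < a -> exists u, Ralpha A F a g u.
Variables (nu rho delta alpha : R) (x xh : X) (gd : Y).
Hypotheses (hnu0 : 0 <= nu) (hnu1 : nu <= 1) (hrho : 0 <= rho) (halpha : 0 < alpha).
Hypotheses (hx : Knu A F nu rho x) (hgd : `|gd - A x| <= delta).
Hypothesis hxh : Ralpha A F alpha gd xh.

(* Compare xh with a minimizer xa for the exact data A x: the error is
   bounded by the approximation error plus the data error. *)
Lemma stability_error : `|A x - A xh| <= rho * alpha `^ nu + delta.
Proof.
have [xa hxa] := hex (A x) halpha.
have [hAx _] := minimizers_nonexpansive hip hFp hFc halpha hxa hxh.
have := Knu_error_bound hx halpha hxa.
have := ler_distD (A xa) (A x) (A xh).
have := hgd; rewrite (distrC (A x) gd) in hAx; lra.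
Qed.

Lemma stability_residual : `|gd - A xh| <= delta + rho * alpha `^ nu.
Proof.
have [xa hxa] := hex (A x) halpha.
have [_ hres] := minimizers_nonexpansive hip hFp hFc halpha hxa hxh.
have := Knu_error_bound hx halpha hxa.
have := ler_distD (A x - A xa) (gd - A xh) 0.
rewrite (distrC (A x) gd) in hres.
have := hgd; rewrite !subr0 (distrC (gd - A xh)); lra.
Qed.

(* Regularizing A xh with a parameter b <= alpha: use the shrinking bound
   and the residual of xh; this is where nu <= 1 enters. *)
Lemma regularized_jump_small b v : 0 < b -> b <= alpha -> Ralpha A F b (A xh) v ->
  b `^ (- nu) * `|A xh - A v| <= alpha `^ (- nu) * delta + rho.
Proof.
move=> b0 ba hv.
have hshr := minimizers_shrink hip hFp hFc halpha b0 hxh hv.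
have hres := stability_residual.
have hratio := powRN_mulr_le hnu1 b0 ba.
have hQ := powRN_mulr nu halpha.
have P0 : 0 <= b `^ (- nu) by exact: powR_ge0.
have Q0 : 0 <= alpha `^ (- nu) by exact: powR_ge0.
have ai : 0 < alpha^-1 by rewrite invr_gt0.
apply: le_trans (ler_wpM2l P0 hshr) _.
have -> : b `^ (- nu) * (b / alpha * `|gd - A xh|) =
          b `^ (- nu) * b * (alpha^-1 * `|gd - A xh|) by ring.
apply: le_trans (ler_wpM2r (mulr_ge0 (ltW ai) (normr_ge0 _)) hratio) _.
have -> : alpha `^ (- nu) * alpha * (alpha^-1 * `|gd - A xh|) =
          alpha `^ (- nu) * `|gd - A xh| by field; rewrite gt_eqF.
apply: le_trans (ler_wpM2l Q0 hres) _.
by rewrite mulrDr mulrCA hQ mulr1.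
Qed.

(* Regularizing A xh with a parameter b > alpha: compare with a minimizer w
   for the exact data A x, using nonexpansiveness of the residual. *)
Lemma regularized_jump_large b v : alpha < b -> Ralpha A F b (A xh) v ->
  b `^ (- nu) * `|A xh - A v| <= alpha `^ (- nu) * delta + 2 * rho.
Proof.
move=> ab hv; have b0 := lt_trans halpha ab.
have [w hw] := hex (A x) b0.
have [_ hres] := minimizers_nonexpansive hip hFp hFc b0 hv hw.
have hw_err := Knu_error_bound hx b0 hw.
have herr := stability_error.
have hjump : `|A xh - A v| <= (rho * alpha `^ nu + delta) + rho * b `^ nu.
  have := ler_distD (A x - A w) (A xh - A v) 0.
  rewrite !subr0; rewrite (distrC (A x) (A xh)) in herr; lra.
have hPQ := powRN_le hnu0 halpha (ltW ab).
have P0 : 0 <= b `^ (- nu) by exact: powR_ge0.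
apply: le_trans (ler_wpM2l P0 hjump) _.
rewrite mulrDr mulrCA powRN_mulr // mulr1.
have : b `^ (- nu) * (rho * alpha `^ nu + delta) <=
       alpha `^ (- nu) * (rho * alpha `^ nu + delta).
  have d0 : 0 <= delta := le_trans (normr_ge0 _) hgd.
  by apply: ler_wpM2r hPQ; rewrite addr_ge0 ?mulr_ge0 ?powR_ge0.
have : alpha `^ (- nu) * (rho * alpha `^ nu + delta) = rho + alpha `^ (- nu) * delta.
  by rewrite mulrDr mulrCA powRN_mulr // mulr1.
lra.
Qed.

Lemma regularized_source : Knu A F nu (alpha `^ (- nu) * delta + 2 * rho) xh.
Proof.
apply: Knu_intro => b v b0 hv; have [ba|ab] := leP b alpha.
- apply: le_trans (regularized_jump_small b0 ba hv) _.
  by have := hrho; lra.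
- exact: regularized_jump_large.
Qed.

End Stability.

Lemma apriori_scale (R : realType) (c rho delta nu : R) :
  0 <= c -> 0 < rho -> 0 < delta -> 0 < nu ->
  (c * rho `^ (- nu^-1) * delta `^ (nu^-1)) `^ nu = c `^ nu * delta / rho.
Proof.
move=> c0 r0 d0 n0.
rewrite powRM ?mulr_ge0 ?powR_ge0 // powRM ?powR_ge0 // -!powRrM mulNr.
by rewrite mulVf ?gt_eqF // powRN !powRr1 ?ltW // mulrAC.
Qed.

Lemma apriori_source_bound (R : realType) (nu rho delta alpha c : R) :
  0 < nu -> 0 < rho -> 0 < delta -> 0 < c ->
  c * rho `^ (- nu^-1) * delta `^ (nu^-1) <= alpha ->
  alpha `^ (- nu) * delta <= c `^ (- nu) * rho.
Proof.
move=> n0 r0 d0 c0 hc.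
have s0 : 0 < c * rho `^ (- nu^-1) * delta `^ (nu^-1) by rewrite !mulr_gt0 ?powR_gt0.
have a0 := lt_le_trans s0 hc.
have := ge0_ler_powR (ltW n0) (ltW s0) (ltW a0) hc.
rewrite apriori_scale ?(ltW c0) // => hpow.
rewrite !powRN ler_pdivrMl ?powR_gt0 // mulrCA ler_pdivlMl ?powR_gt0 //.
by rewrite -ler_pdivrMr.
Qed.

Lemma apriori_error_bound (R : realType) (nu rho delta alpha c : R) :
  0 < nu -> 0 < rho -> 0 < delta -> 0 <= c -> 0 < alpha ->
  alpha <= c * rho `^ (- nu^-1) * delta `^ (nu^-1) ->
  rho * alpha `^ nu <= c `^ nu * delta.
Proof.
move=> n0 r0 d0 c0 a0 hc.
have s0 : 0 <= c * rho `^ (- nu^-1) * delta `^ (nu^-1) by rewrite !mulr_ge0 ?powR_ge0.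
have := ge0_ler_powR (ltW n0) (ltW a0) s0 hc.
by rewrite apriori_scale // ler_pdivlMr // mulrC.
Qed.

Lemma discrepancy_source_bound (R : realType) (nu rho delta alpha c : R) :
  1 < c -> 0 < alpha -> c * delta <= delta + rho * alpha `^ nu ->
  alpha `^ (- nu) * delta <= (c - 1)^-1 * rho.
Proof.
move=> c1 a0 hc.
rewrite powRN ler_pdivrMl ?powR_gt0 // mulrCA ler_pdivlMl ?subr_gt0 //.
by rewrite mulrC; lra.
Qed.

Unset Implicit Arguments.

Theorem theorem1 (R : realType)
  (* the real Banach space X *)
  (X : completeNormedModType R)
  (* (X, tau): the same vector space with a locally convex Hausdorff topology,
     represented by a linear bijection e : X -> Xt *)
  (Xt : tvsType R) (e : {linear X -> Xt}) (ei : Xt -> X)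
  (hei : cancel e ei) (hie : cancel ei e) (hXt : hausdorff_space Xt)
  (* the regularizer R *)
  (F : X -> \bar R) (hFp : proper_fun F) (hFc : convex_efun F)
  (hFcomp : forall lam : R, compact (e @` [set z | (F z <= lam%:E)%E]))
  (* the Hilbert space Y *)
  (Y : completeNormedModType R) (ip : Y -> Y -> R) (hip : is_inner_product ip)
  (* A linear, continuous from (X, tau) to (Y, weak topology) *)
  (A : {linear X -> Y})
  (hA : forall f : {linear Y -> R^o}, continuous f ->
          continuous (fun z : Xt => f (A (ei z))))
  (* L : X x X -> [0, oo] with the triangle inequality *)
  (L : X -> X -> \bar R) (hL0 : forall x y, (0 <= L x y)%E)
  (hLtri : forall x y z, (L x z <= L x y + L y z)%E)
  (nu rho delta : R) (hnu : 0 < nu <= 1) (hrho : 0 < rho) (hdelta : 0 < delta)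
  (x : X) (hx : Knu A F nu rho x)
  (gd : Y) (hgd : `|gd - A x| <= delta)
  (alpha : R) (halpha : 0 < alpha) (xh : X) (hxh : Ralpha A F alpha gd xh) :
  (forall cl cr : R, 0 < cl -> cl <= cr ->
     cl * rho `^ (- nu^-1) * delta `^ (nu^-1) <= alpha ->
     alpha <= cr * rho `^ (- nu^-1) * delta `^ (nu^-1) ->
     (L x xh <= Omega A L ((1 + cr `^ nu) * delta)
                  (Knu A F nu ((2 + cl `^ (- nu)) * rho)))%E)
  /\
  (forall cD CD : R, 1 < cD -> cD < CD ->
     cD * delta <= `|gd - A xh| -> `|gd - A xh| <= CD * delta ->
     (L x xh <= Omega A L ((1 + CD) * delta)
                  (Knu A F nu ((2 + (cD - 1)^-1) * rho)))%E).
Proof.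
case/andP: hnu => nu0 nu1.
have hex g a : 0 < a -> exists u, Ralpha A F a g u :=
  @exists_minimizer R X Xt e ei Y ip A F hip hei hie hXt hFp hFcomp hA g a.
have err := stability_error hip hFp hFc hex halpha hx hgd hxh.
have res := stability_residual hip hFp hFc hex halpha hx hgd hxh.
have src := regularized_source hip hFp hFc hex (ltW nu0) nu1 (ltW hrho) halpha hx hgd hxh.
split.
- move=> cl cr cl0 clr lo hi.
  have hsrc := apriori_source_bound nu0 hrho hdelta cl0 lo.
  have herr := apriori_error_bound nu0 hrho hdelta (ltW (lt_le_trans cl0 clr)) halpha hi.
  have c0 : 0 <= cl `^ (- nu) by exact: powR_ge0.
  apply: le_Omega; last by lra.
  + by apply: Knu_mono hx; nra.
  + by apply: Knu_mono src; lra.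
- move=> cD CD cD1 cDC lo hi.
  have hsrc := discrepancy_source_bound cD1 halpha (le_trans lo res).
  have c0 : 0 < (cD - 1)^-1 by rewrite invr_gt0 subr_gt0.
  apply: le_Omega.
  + by apply: Knu_mono hx; nra.
  + by apply: Knu_mono src; lra.
  + by have := ler_distD gd (A x) (A xh); rewrite (distrC (A x) gd); lra.
Qed.
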